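(* Let $n\ge 1$, let $\Delta := (\sqrt{n+1})^{n+1}$, and let $X=\{x_1,\ldots,x_v\}\subseteq\{0,1\}^n$ be non-empty. Let $A\in\mathbb{Z}^{f\times n}$, $b\in\mathbb{Z}^f$ with all entries of absolute value at most $\Delta$ be such that $\{x\in\mathbb{R}^n\mid Ax\le b\}=\operatorname{conv}(X)$ is a non-redundant description, and let $S\in\mathbb{R}^{f\times v}$ be the slack matrix, $S_{ij}=b_i-A_ix_j$ (so $S_{ij}\in\{0,1,\ldots,(n+1)\Delta\}$). Let $S=UV$ with $U\in\mathbb{R}_{\ge0}^{f\times r}$, $V\in\mathbb{R}_{\ge 0}^{r\times v}$ be a normalized non-negative factorization, i.e. $\|U^\ell\|_\infty=\|V_\ell\|_\infty$ for every $\ell=1,\ldots,r$. Then $\|U\|_\infty\le\Delta$ and $\|V\|_\infty\le\Delta$.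
   Context: $A_i$ denotes the $i$-th row of a matrix $A$ and $A^i$ its $i$-th column; for a matrix or vector, $\|\cdot\|_\infty$ denotes the maximum absolute value of an entry. So $U^\ell$ is the $\ell$-th column of $U$ and $V_\ell$ the $\ell$-th row of $V$. *)

From HB Require Import structures.
From mathcomp Require Import all_boot all_order all_algebra.
From mathcomp Require Import reals.
Set Implicit Arguments. Unset Strict Implicit. Unset Printing Implicit Defensive.
Import Order.TTheory GRing.Theory Num.Theory.
Local Open Scope ring_scope.

Definition Delta (R : realType) (n : nat) : R := Num.sqrt (n.+1)%:R ^+ n.+1.

Definition mx_inf_norm (R : realType) m p (M : 'M[R]_(m, p)) : R :=
  \big[Num.max/0]_(i < m) \big[Num.max/0]_(j < p) `|M i j|.

Definition in_conv (R : realType) n v (X : 'M[R]_(n, v)) (x : 'cV[R]_n) : Prop :=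
  exists lam : 'I_v -> R,
    (forall j, 0 <= lam j) /\ \sum_j lam j = 1 /\
    forall k, x k ord0 = \sum_j lam j * X k j.

Definition ineq_holds (R : realType) f n (A : 'M[int]_(f, n)) (b : 'cV[int]_f)
    (i : 'I_f) (x : 'cV[R]_n) : Prop :=
  \sum_k (A i k)%:~R * x k ord0 <= (b i ord0)%:~R.

Definition slack (R : realType) f n v (A : 'M[int]_(f, n)) (b : 'cV[int]_f)
    (X : 'M[R]_(n, v)) : 'M[R]_(f, v) :=
  \matrix_(i, j) ((b i ord0)%:~R - \sum_k (A i k)%:~R * X k j).

(* Each product U_il V_lj is a single non-negative summand of the slack
   S_ij = b_i - A_i x_j <= (n+1) Delta <= Delta^2, because x_j is a 0/1 vector
   and (n+1) = sqrt(n+1)^2 <= Delta.  Maximizing over i and j gives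
   ||U^l|| ||V_l|| <= Delta^2, which the normalization turns into
   ||U^l||^2 <= Delta^2 and ||V_l||^2 <= Delta^2.  Only the bounds on A, b and
   the 0/1 entries of X are needed. *)
From HB Require Import structures.
From mathcomp Require Import all_boot all_order all_algebra.
From mathcomp Require Import reals.
From mathcomp Require Import lra.
Set Implicit Arguments. Unset Strict Implicit. Unset Printing Implicit Defensive.
Import Order.TTheory GRing.Theory Num.Theory.
Local Open Scope ring_scope.

Section InfNorm.
Variables (R : realType) (m p : nat).

Lemma mx_inf_norm_ind (P : R -> Prop) (M : 'M[R]_(m, p)) :
  P 0 -> (forall x y, P x -> P y -> P (Num.max x y)) ->
  (forall i j, P `|M i j|) -> P (mx_inf_norm M).
Proof. by move=> P0 Pmax PM; do 2![apply: big_ind => // ? _]. Qed.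

Lemma mx_inf_norm_ge0 (M : 'M[R]_(m, p)) : 0 <= mx_inf_norm M.
Proof.
by apply: (mx_inf_norm_ind (P := fun x => 0 <= x)) => // x y x0 _; rewrite le_max x0.
Qed.

Lemma mx_inf_norm_le (M : 'M[R]_(m, p)) c :
  0 <= c -> (forall i j, `|M i j| <= c) -> mx_inf_norm M <= c.
Proof.
move=> c0 Mc; apply: (mx_inf_norm_ind (P := fun x => x <= c)) => // x y.
by rewrite ge_max => ->.
Qed.

Lemma entry_le_mx_inf_norm (M : 'M[R]_(m, p)) i j : `|M i j| <= mx_inf_norm M.
Proof.
rewrite /mx_inf_norm (bigD1 i) //= (bigD1 j) //=.
by rewrite le_max; apply/orP; left; rewrite le_max lexx.
Qed.

End InfNorm.

Lemma mx_inf_normM_le (R : realType) m p q s (M : 'M[R]_(m, p)) (N : 'M[R]_(q, s)) c :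
  0 <= c -> (forall i j k l, `|M i j| * `|N k l| <= c) ->
  mx_inf_norm M * mx_inf_norm N <= c.
Proof.
move=> c0 MNc.
have Pmax (g : R -> R) x y : g x <= c -> g y <= c -> g (Num.max x y) <= c.
  by move=> gx gy; case: (leP x y).
have MN_le i j : `|M i j| * mx_inf_norm N <= c.
  apply: (mx_inf_norm_ind (P := fun y => `|M i j| * y <= c)) => //.
    by rewrite mulr0.
  exact: (Pmax (fun y => `|M i j| * y)).
apply: (mx_inf_norm_ind (P := fun x => x * mx_inf_norm N <= c)) => //.
  by rewrite mul0r.
exact: (Pmax (fun x => x * mx_inf_norm N)).
Qed.

Lemma normalized_factor_bound (R : realType) f r v
    (U : 'M[R]_(f, r)) (V : 'M[R]_(r, v)) d :
  0 <= d -> (forall i l, 0 <= U i l) -> (forall l j, 0 <= V l j) ->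
  (forall i j, (U *m V) i j <= d ^+ 2) ->
  (forall l, mx_inf_norm (col l U) = mx_inf_norm (row l V)) ->
  mx_inf_norm U <= d /\ mx_inf_norm V <= d.
Proof.
move=> d0 U0 V0 UVd Ul_eq.
have summand_le i l j : U i l * V l j <= d ^+ 2.
  apply: le_trans (UVd i j); rewrite mxE (bigD1 l) //= lerDl.
  by apply: sumr_ge0 => k _; apply: mulr_ge0.
have normUl_sq l : mx_inf_norm (col l U) ^+ 2 <= d ^+ 2.
  rewrite expr2 {2}Ul_eq; apply: mx_inf_normM_le => [|i ? ? j].
    exact: exprn_ge0.
  by rewrite !mxE !ger0_norm.
have normUl l : mx_inf_norm (col l U) <= d.
  by rewrite -(ler_pXn2r (isT : (0 < 2)%N)) ?nnegrE ?mx_inf_norm_ge0.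
split; apply: mx_inf_norm_le => //.
- move=> i l; have := entry_le_mx_inf_norm (col l U) i ord0.
  by rewrite mxE => /le_trans->.
- move=> l j; have := entry_le_mx_inf_norm (row l V) ord0 j.
  by rewrite mxE -Ul_eq => /le_trans->.
Qed.

Lemma slack_le (R : realType) f n v (A : 'M[int]_(f, n)) (b : 'cV[int]_f)
    (X : 'M[R]_(n, v)) a i j :
  (forall k, `|X k j| <= 1) ->
  (forall k, `|(A i k)%:~R| <= a) -> `|(b i ord0)%:~R| <= a ->
  slack A b X i j <= a * n.+1%:R.
Proof.
move=> X1 Aa ba; rewrite mxE mulr_natr mulrSr.
have AXa : `|\sum_k (A i k)%:~R * X k j| <= a *+ n.
  apply: le_trans (ler_norm_sum _ _ _) _.
  rewrite -[n in a *+ n]card_ord -sumr_const; apply: ler_sum => k _.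
  rewrite normrM -[a in _ <= a]mulr1.
  by apply: ler_pM => //; apply: normr_ge0.
have := ler_norm ((b i ord0)%:~R : R).
have := ler_norm (- \sum_k (A i k)%:~R * X k j : R); rewrite normrN.
move: AXa ba; lra.
Qed.

Lemma Delta_ge0 (R : realType) n : 0 <= Delta R n.
Proof. by rewrite exprn_ge0 // sqrtr_ge0. Qed.

Lemma Delta_ge (R : realType) n : n.+1%:R <= Delta R n.
Proof.
rewrite /Delta; case: n => [|m]; first by rewrite sqrtr1 expr1.
set s := Num.sqrt _.
have s1 : 1 <= s by rewrite -sqrtr1 ler_sqrt // ler1n.
have -> : s ^+ m.+2 = s ^+ m * s ^+ 2 by rewrite -exprD addn2.
by rewrite sqr_sqrtr // ler_peMl // exprn_ege1.
Qed.

Theorem lemma2 (R : realType) (n v f r : nat)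
  (X : 'M[R]_(n, v)) (A : 'M[int]_(f, n)) (b : 'cV[int]_f)
  (U : 'M[R]_(f, r)) (V : 'M[R]_(r, v)) :
  (1 <= n)%N ->
  (* X = {x_1,...,x_v} is a non-empty set of 0/1 points (columns of X) *)
  (0 < v)%N ->
  (forall k j, X k j = 0 \/ X k j = 1) ->
  injective (fun j : 'I_v => col j X) ->
  (* entries of A and b bounded by Delta in absolute value *)
  (forall i k, `|(A i k)%:~R| <= Delta R n) ->
  (forall i, `|(b i ord0)%:~R| <= Delta R n) ->
  (* {x | Ax <= b} = conv(X) *)
  (forall x : 'cV[R]_n, (forall i, ineq_holds A b i x) <-> in_conv X x) ->
  (* non-redundancy: dropping any inequality changes the set *)
  (forall i, exists x : 'cV[R]_n,
      (forall i', i' != i -> ineq_holds A b i' x) /\ ~ ineq_holds A b i x) ->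
  (* normalized non-negative factorization S = U V *)
  (forall i l, 0 <= U i l) -> (forall l j, 0 <= V l j) ->
  slack A b X = U *m V ->
  (forall l, mx_inf_norm (col l U) = mx_inf_norm (row l V)) ->
  mx_inf_norm U <= Delta R n /\ mx_inf_norm V <= Delta R n.
Proof.
move=> _ _ X01 _ AD bD _ _ U0 V0 SUV normalized.
apply: (normalized_factor_bound (Delta_ge0 R n) U0 V0 _ normalized) => i j.
have X1 k : `|X k j| <= 1 by case: (X01 k j) => ->; rewrite ?normr0 ?normr1.
rewrite -SUV expr2; apply: le_trans (slack_le X1 (AD i) (bD i)) _.
by apply: ler_wpM2l; [apply: Delta_ge0 | apply: Delta_ge].
Qed.
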